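(* Suppose the linear system $\dot x = A(t)x$ has a nonuniform exponential dichotomy on $\mathbb{R}_0^+$ with constants $(K,\alpha,\mu)$ and a nonuniform bounded growth on $\mathbb{R}_0^+$ with constants $(K_0,a,\varepsilon)$. Then $$a+\max\{\mu,\varepsilon\}\geq \alpha .$$
   Context: Standing setting: $A\colon\mathbb{R}_0^+=[0,+\infty)\to M_n(\mathbb{R})$ is continuous, $\Phi(t)$ is a fundamental matrix of $\dot x=A(t)x$, and $\Phi(t,s):=\Phi(t)\Phi^{-1}(s)$ is the evolution operator. $|\cdot|$ is a norm on $\mathbb{R}^n$ and $\|\cdot\|$ the induced matrix norm. Nonuniform exponential dichotomy on $\mathbb{R}_0^+$ with constants $(K,\alpha,\mu)$: there exist a projector-valued function $P(\cdot)$ (i.e. $P(t)^2=P(t)$) and constants $K\ge 1$, $\alpha>0$, $0\le\mu<\alpha$ such that for all $t,s\ge 0$: $P(t)\Phi(t,s)=\Phi(t,s)P(s)$; $\|\Phi(t,s)P(s)\|\le Ke^{-\alpha(t-s)+\mu s}$ for $t\ge s$; and $\|\Phi(t,s)(I-P(s))\|\le Ke^{\alpha(t-s)+\mu s}$ for $t\le s$. Nonuniform bounded growth on $\mathbb{R}_0^+$ with constants $(K_0,a,\varepsilon)$: there exist $K_0\ge1$, $a>0$, $\varepsilon\ge0$ with $\|\Phi(t,s)\|\le K_0e^{a|t-s|+\varepsilon s}$ for all $t,s\ge0$. *)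

From Stdlib Require Import Reals.
From Coquelicot Require Import Coquelicot.
From mathcomp Require Import all_boot all_algebra.
From mathcomp Require Import Rstruct.

Set Implicit Arguments.
Unset Strict Implicit.
Unset Printing Implicit Defensive.

Local Open Scope R_scope.

Definition is_norm (n : nat) (N : 'cV[R]_n -> R) : Prop :=
  (forall x, 0 <= N x) /\
  (forall x, N x = 0 -> x = 0%R) /\
  (forall (c : R) x, N (c *: x)%R = Rabs c * N x) /\
  (forall x y, N (x + y)%R <= N x + N y).

Definition opnorm (n : nat) (N : 'cV[R]_n -> R) (M : 'M[R]_n) : Rbar :=
  Lub_Rbar (fun r => exists x, N x <= 1 /\ r = N (M *m x)%R).

Definition opnorm_le (n : nat) (N : 'cV[R]_n -> R) (M : 'M[R]_n) (C : R) : Prop :=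
  Rbar_le (opnorm N M) (Rbar.Finite C).

Definition continuous_on_Rplus (n : nat) (A : R -> 'M[R]_n) : Prop :=
  forall t, 0 <= t -> forall i j : 'I_n,
    filterlim (fun s => A s i j) (within (fun s => 0 <= s) (locally t))
              (locally (A t i j)).

(* Phi is a fundamental matrix of x' = A(t) x on [0,+oo):
   Phi(t) invertible for all t >= 0, and Phi'(t) = A(t) Phi(t) for t >= 0
   (entrywise derivative of the function restricted to [0,+oo),
    hence one-sided at t = 0). *)
Definition fundamental_matrix (n : nat) (A : R -> 'M[R]_n) (Phi : R -> 'M[R]_n)
  : Prop :=
  (forall t, 0 <= t -> Phi t \in unitmx) /\
  (forall t, 0 <= t -> forall i j : 'I_n,
     filterlim (fun h => (Phi (t + h) i j - Phi t i j) / h)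
               (within (fun h => h <> 0 /\ 0 <= t + h) (locally 0))
               (locally ((A t *m Phi t)%R i j))).

Definition evol (n : nat) (Phi : R -> 'M[R]_n) (t s : R) : 'M[R]_n :=
  (Phi t *m invmx (Phi s))%R.

Definition nonuniform_exp_dichotomy (n : nat) (N : 'cV[R]_n -> R)
  (Phi : R -> 'M[R]_n) (K alpha mu : R) : Prop :=
  exists P : R -> 'M[R]_n,
    1 <= K /\ 0 < alpha /\ 0 <= mu /\ mu < alpha /\
    (forall t, 0 <= t -> (P t *m P t)%R = P t) /\
    (forall t s, 0 <= t -> 0 <= s -> (P t *m evol Phi t s)%R = (evol Phi t s *m P s)%R) /\
    (forall t s, 0 <= s -> s <= t ->
       opnorm_le N (evol Phi t s *m P s)%R (K * exp (- alpha * (t - s) + mu * s))) /\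
    (forall t s, 0 <= t -> t <= s ->
       opnorm_le N (evol Phi t s *m (1%:M - P s))%R (K * exp (alpha * (t - s) + mu * s))).

Definition nonuniform_bounded_growth (n : nat) (N : 'cV[R]_n -> R)
  (Phi : R -> 'M[R]_n) (K0 a eps : R) : Prop :=
  1 <= K0 /\ 0 < a /\ 0 <= eps /\
  (forall t s, 0 <= t -> 0 <= s ->
     opnorm_le N (evol Phi t s) (K0 * exp (a * Rabs (t - s) + eps * s))).

(* Going from 0 to t and back, P(0)x = Phi(0,t) Phi(t,0) P(0) x, so
   bounded growth and the stable estimate give |P(0)x| <= K0 K e^((a + eps - alpha) t) |x|.
   Likewise (I - P(0))x = Phi(0,s) (I - P(s)) Phi(s,0) x gives
   |(I - P(0))x| <= K K0 e^((a + mu - alpha) s) |x|. If a + max(mu, eps) < alpha both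
   bounds tend to 0, hence x = P(0)x + (I - P(0))x = 0 for every x, which is absurd in
   positive dimension. *)
From Stdlib Require Import Reals Lra.
From Coquelicot Require Import Coquelicot.
From mathcomp Require Import all_boot all_algebra.
From mathcomp Require Import Rstruct.

Local Open Scope R_scope.

Set Implicit Arguments.
Unset Strict Implicit.

Lemma is_norm0 (n : nat) (N : 'cV[R]_n -> R) : is_norm N -> N 0%R = 0.
Proof.
move=> [_ [_ [N_scale _]]].
by have := N_scale 0 0%R; rewrite GRing.scale0r Rabs_R0 Rmult_0_l.
Qed.

Lemma opnorm_le_mulmx (n : nat) (N : 'cV[R]_n -> R) (M : 'M[R]_n) (C : R) :
  is_norm N -> opnorm_le N M C -> forall x, N (M *m x)%R <= C * N x.
Proof.
move=> HN HM x; have [N_ge0 [N_eq0 [N_scale _]]] := HN.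
have unit_ball : forall u, N u <= 1 -> N (M *m u)%R <= C.
  move=> u Nu.
  have [ub _] := Lub_Rbar_correct (fun r => exists u, N u <= 1 /\ r = N (M *m u)%R).
  exact: Rbar_le_trans (ub _ (ex_intro _ u (conj Nu erefl))) HM.
have [Nx_pos | /esym /N_eq0 ->] := Rle_lt_or_eq_dec _ _ (N_ge0 x); last first.
  by rewrite mulmx0 (is_norm0 HN); lra.
have := unit_ball (/ N x *: x)%R.
rewrite -scalemxAr !N_scale Rabs_pos_eq; last by left; apply: Rinv_0_lt_compat.
rewrite Rinv_l; last lra.
move=> /(_ (Rle_refl 1)) le_C.
have := Rmult_le_compat_l (N x) _ _ (Rlt_le _ _ Nx_pos) le_C.
rewrite -Rmult_assoc Rinv_r; last lra.
by rewrite Rmult_1_l Rmult_comm.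
Qed.

Lemma le_exp_decay_eq0 (D c v : R) :
  0 < c -> 0 <= v -> (forall t, 0 <= t -> v <= D * exp (- c * t)) -> v = 0.
Proof.
move=> c_pos v_ge0 decay.
case: (Rle_lt_or_eq_dec _ _ v_ge0) => // v_pos.
have v_le_D : v <= D by have := decay 0 (Rle_refl 0); rewrite Rmult_0_r exp_0 Rmult_1_r.
have ratio_gt1 : 1 < 2 * D / v.
  apply: (Rmult_lt_reg_r v); first lra.
  by rewrite /Rdiv Rmult_assoc Rinv_l; lra.
(* at [t = ln (2 D / v) / c] the bound becomes [v / 2] *)
have t_ge0 : 0 <= ln (2 * D / v) / c.
  apply: Rmult_le_pos; last by left; apply: Rinv_0_lt_compat.
  by rewrite -ln_1; left; apply: ln_increasing; lra.
have := decay _ t_ge0.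
have -> : - c * (ln (2 * D / v) / c) = - ln (2 * D / v) by field; lra.
rewrite exp_Ropp exp_ln; last lra.
have -> : D * / (2 * D / v) = v / 2 by field; lra.
lra.
Qed.

Lemma const_mx1_neq0 (n : nat) : (0 < n)%N -> (const_mx 1 != 0 :> 'cV[R]_n)%R.
Proof.
move=> n_gt0; apply/eqP => /(congr1 (fun m : 'cV[R]_n => m (Ordinal n_gt0) ord0)).
by rewrite !mxE; apply/eqP; exact: GRing.oner_neq0.
Qed.

Section Dichotomy.

Variables (n : nat) (N : 'cV[R]_n -> R) (Phi P : R -> 'M[R]_n).
Variables (K alpha mu K0 a eps : R).

Hypothesis N_norm : is_norm N.
Hypothesis Phi_unit : forall t, 0 <= t -> Phi t \in unitmx.
Hypothesis K_ge0 : 0 <= K.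
Hypothesis K0_ge0 : 0 <= K0.
Hypothesis P_comm : forall t s, 0 <= t -> 0 <= s ->
  (P t *m evol Phi t s)%R = (evol Phi t s *m P s)%R.
Hypothesis stable_bound : forall t s, 0 <= s -> s <= t ->
  opnorm_le N (evol Phi t s *m P s)%R (K * exp (- alpha * (t - s) + mu * s)).
Hypothesis unstable_bound : forall t s, 0 <= t -> t <= s ->
  opnorm_le N (evol Phi t s *m (1%:M - P s))%R (K * exp (alpha * (t - s) + mu * s)).
Hypothesis growth_bound : forall t s, 0 <= t -> 0 <= s ->
  opnorm_le N (evol Phi t s) (K0 * exp (a * Rabs (t - s) + eps * s)).

Lemma evol_cancel t : 0 <= t -> (evol Phi 0 t *m evol Phi t 0 = 1%:M)%R.
Proof.
move=> t_ge0; have zero_ge0 := Rle_refl 0.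
by rewrite /evol mulmxA -(mulmxA (Phi 0)) mulVmx ?Phi_unit // mulmx1 mulmxV ?Phi_unit.
Qed.

Lemma stable_part_eq0 : a + eps < alpha -> forall x, N (P 0 *m x)%R = 0.
Proof.
move=> rate_neg x; have [N_ge0 _] := N_norm.
apply: (@le_exp_decay_eq0 (K0 * K * N x) (alpha - a - eps)) => // [|t t_ge0]; first lra.
have zero_ge0 := Rle_refl 0.
have -> : (P 0 *m x = evol Phi 0 t *m ((evol Phi t 0 *m P 0) *m x))%R.
  by rewrite 2!(mulmxA (evol Phi 0 t)) evol_cancel // mul1mx.
apply: Rle_trans (opnorm_le_mulmx N_norm (growth_bound zero_ge0 t_ge0) _) _.
apply: Rle_trans (Rmult_le_compat_l _ _ _ _
  (opnorm_le_mulmx N_norm (stable_bound zero_ge0 t_ge0) x)) _.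
  by apply: Rmult_le_pos; [lra | left; apply: exp_pos].
rewrite Rabs_left1; last lra.
have -> : exp (- (alpha - a - eps) * t)
          = exp (a * - (0 - t) + eps * t) * exp (- alpha * (t - 0) + mu * 0).
  by rewrite -exp_plus; f_equal; ring.
by right; ring.
Qed.

Lemma unstable_part_eq0 : a + mu < alpha -> forall x, N ((1%:M - P 0) *m x)%R = 0.
Proof.
move=> rate_neg x; have [N_ge0 _] := N_norm.
apply: (@le_exp_decay_eq0 (K * K0 * N x) (alpha - a - mu)) => // [|s s_ge0]; first lra.
have zero_ge0 := Rle_refl 0.
have -> : ((1%:M - P 0) *m x
           = (evol Phi 0 s *m (1%:M - P s)) *m (evol Phi s 0 *m x))%R.
  apply/esym; rewrite -mulmxA (mulmxA (1%:M - P s)) mulmxBl mul1mx P_comm //.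
  by rewrite -{1}(mulmx1 (evol Phi s 0)) -mulmxBr 2!(mulmxA (evol Phi 0 s)) evol_cancel // mul1mx.
apply: Rle_trans (opnorm_le_mulmx N_norm (unstable_bound zero_ge0 s_ge0) _) _.
apply: Rle_trans (Rmult_le_compat_l _ _ _ _
  (opnorm_le_mulmx N_norm (growth_bound s_ge0 zero_ge0) x)) _.
  by apply: Rmult_le_pos; [lra | left; apply: exp_pos].
rewrite Rabs_pos_eq; last lra.
have -> : exp (- (alpha - a - mu) * s)
          = exp (alpha * (0 - s) + mu * s) * exp (a * (s - 0) + eps * 0).
  by rewrite -exp_plus; f_equal; ring.
by right; ring.
Qed.

End Dichotomy.

Unset Implicit Arguments.

Theorem mainTheorem1 (n : nat) (Hn : (0 < n)%N) (N : 'cV[R]_n -> R)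
  (A Phi : R -> 'M[R]_n) (K alpha mu K0 a eps : R) :
  is_norm N ->
  continuous_on_Rplus A ->
  fundamental_matrix A Phi ->
  nonuniform_exp_dichotomy N Phi K alpha mu ->
  nonuniform_bounded_growth N Phi K0 a eps ->
  a + Rmax mu eps >= alpha.
Proof.
move=> N_norm _ [Phi_unit _] [P [K_ge1 [_ [_ [_ [_ [P_comm [stable unstable]]]]]]]].
move=> [K0_ge1 [_ [_ growth]]].
apply: Rnot_lt_ge => rate_lt.
have eps_rate : a + eps < alpha by have := Rmax_r mu eps; lra.
have mu_rate : a + mu < alpha by have := Rmax_l mu eps; lra.
have K_ge0 : 0 <= K by lra.
have K0_ge0 : 0 <= K0 by lra.
have Ns := stable_part_eq0 N_norm Phi_unit K0_ge0 stable growth eps_rate.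
have Nu := unstable_part_eq0 N_norm Phi_unit K_ge0 P_comm unstable growth mu_rate.
have [N_ge0 [N_eq0 [_ N_triangle]]] := N_norm.
pose x : 'cV[R]_n := const_mx 1%R.
have x_split : x = (P 0 *m x + (1%:M - P 0) *m x)%R.
  by rewrite -mulmxDl GRing.addrC GRing.subrK mul1mx.
have Nx0 : N x = 0.
  have := N_triangle (P 0 *m x)%R ((1%:M - P 0) *m x)%R.
  by rewrite -x_split Ns Nu Rplus_0_r => /Rle_antisym; apply; exact: N_ge0.
by move/eqP: (const_mx1_neq0 Hn); apply; exact: (N_eq0 x Nx0).
Qed.
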